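(* The set $\mathcal{L}_3$ of lines which meet $\mathcal{C}$ in exactly one point, are contained in an osculating plane of $\mathcal{C}$, and are not tangent lines of $\mathcal{C}$, is a single $G$-orbit, and every $\ell\in\mathcal{L}_3$ satisfies $OD_2(\ell)=OD_0(\ell)=[1,1,\tfrac{q-1}{2},\tfrac{q-1}{2},0]$.
   Context: Let $q$ be a power of a prime $p$, with $p\neq 2,3$. In $\mathrm{PG}(3,q)$ with coordinates $(Y_0,\dots,Y_3)$, the twisted cubic is $\mathcal{C}=\{P(t)=(1,t,t^2,t^3):t\in\mathbb{F}_q\}\cup\{P(\infty)=(0,0,0,1)\}$. $G\le \mathrm{PGL}(4,q)$ is the image of $\mathrm{PGL}(2,q)$ under the map sending the matrix $\begin{pmatrix}a&b\\c&d\end{pmatrix}$ to $\begin{pmatrix} a^3&a^2b&ab^2&b^3\\ 3a^2c&a^2d+2abc&b^2c+2abd&3b^2d\\ 3ac^2&bc^2+2acd&ad^2+2bcd&3bd^2\\ c^3&c^2d&cd^2&d^3\end{pmatrix}$. Osculating planes: $\Pi(t):-t^3Y_0+3t^2Y_1-3tY_2+Y_3=0$ ($t\in\mathbb{F}_q$), $\Pi(\infty):Y_0=0$. Tangent line at $P\in\mathcal{C}$: the line through $P$ meeting $\mathcal{C}$ with multiplicity two at $P$. Point classes: $\mathcal{P}_1$ = points of $\mathcal{C}$; $\mathcal{P}_2$ = points not on $\mathcal{C}$ on a tangent line; $\mathcal{P}_3$ = points not on $\mathcal{C}$ on exactly three osculating planes; $\mathcal{P}_4$ = points not on $\mathcal{C}$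 on exactly one osculating plane; $\mathcal{P}_5$ = points on no osculating plane. Plane classes: $\mathcal{H}_1$ = osculating planes; $\mathcal{H}_2$ = planes meeting $\mathcal{C}$ in exactly two points; $\mathcal{H}_3$ = exactly three points; $\mathcal{H}_4$ = non-osculating planes meeting $\mathcal{C}$ in exactly one point; $\mathcal{H}_5$ = planes disjoint from $\mathcal{C}$. $OD_0(\ell)$ (resp. $OD_2(\ell)$) is the list of the numbers of points of $\ell$ in $\mathcal{P}_1,\dots,\mathcal{P}_5$ (resp. planes through $\ell$ in $\mathcal{H}_1,\dots,\mathcal{H}_5$). *)

From HB Require Import structures.
From mathcomp Require Import all_boot all_order all_algebra.
Set Implicit Arguments. Unset Strict Implicit. Unset Printing Implicit Defensive.
Import GRing.Theory.
Local Open Scope ring_scope.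

(* PG(3,q) over a finite field F (q = #|F|).  A projective subspace of
   (projective) dimension k-1 is represented canonically by the square
   matrix <<S>>%MS whose row space is the corresponding k-dimensional
   vector subspace of F^4 (row vectors). *)

Section TwistedCubic.
Variable F : finFieldType.

Definition is_subsp (k : nat) (S : 'M[F]_4) : bool :=
  (<<S>>%MS == S) && (\rank S == k).

Definition points : {set 'M[F]_4} := [set S | is_subsp 1 S].
Definition lines  : {set 'M[F]_4} := [set S | is_subsp 2 S].
Definition planes : {set 'M[F]_4} := [set S | is_subsp 3 S].

Definition incid (A B : 'M[F]_4) : bool := (A <= B)%MS.

(* parameters: Some t = t in F, None = infinity *)
Definition cvec (t : F) : 'rV[F]_4 := \row_(i < 4) t ^+ i.
Definition cvec_inf : 'rV[F]_4 := \row_(i < 4) (if i == 3 :> nat then 1 else 0).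

Definition cpt (t : option F) : 'M[F]_4 :=
  match t with Some t => <<cvec t>>%MS | None => <<cvec_inf>>%MS end.

Definition curve : {set 'M[F]_4} := [set cpt t | t : option F].

(* osculating planes, given by their linear equation (column vector a:
   plane = { Y | Y *m a = 0 }) *)
Definition osc_fun (t : option F) : 'cV[F]_4 :=
  match t with
  | Some t => \col_(i < 4) nth 0 [:: - t ^+ 3; 3%:R * t ^+ 2; - (3%:R * t); 1] i
  | None => \col_(i < 4) (if i == 0 :> nat then 1 else 0)
  end.

Definition osc (t : option F) : 'M[F]_4 := <<kermx (osc_fun t)>>%MS.
Definition oscs : {set 'M[F]_4} := [set osc t | t : option F].

(* tangent lines: spanned by P(t) and the derivative P'(t) = (0,1,2t,3t^2);
   at infinity (local parameter s = 1/t, P = (s^3,s^2,s,1)) spanned by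
   (0,0,0,1) and (0,0,1,0). *)
Definition dcvec (t : F) : 'rV[F]_4 := \row_(i < 4) (i%:R * t ^+ i.-1).
Definition dcvec_inf : 'rV[F]_4 := \row_(i < 4) (if i == 2 :> nat then 1 else 0).

Definition tangent (t : option F) : 'M[F]_4 :=
  match t with
  | Some t => <<col_mx (cvec t) (dcvec t)>>%MS
  | None => <<col_mx cvec_inf dcvec_inf>>%MS
  end.
Definition tangents : {set 'M[F]_4} := [set tangent t | t : option F].

Definition nosc (P : 'M[F]_4) : nat := #|[set H in oscs | incid P H]|.
Definition ncurve (S : 'M[F]_4) : nat := #|[set P in curve | incid P S]|.

Definition PC1 : {set 'M[F]_4} := curve.
Definition PC2 : {set 'M[F]_4} :=
  [set P in points | (P \notin curve) && [exists t, incid P (tangent t)]].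
Definition PC3 : {set 'M[F]_4} :=
  [set P in points | (P \notin curve) && (nosc P == 3)%N].
Definition PC4 : {set 'M[F]_4} :=
  [set P in points | (P \notin curve) && (nosc P == 1)%N].
Definition PC5 : {set 'M[F]_4} := [set P in points | nosc P == 0%N].

Definition HC1 : {set 'M[F]_4} := oscs.
Definition HC2 : {set 'M[F]_4} := [set H in planes | ncurve H == 2%N].
Definition HC3 : {set 'M[F]_4} := [set H in planes | ncurve H == 3%N].
Definition HC4 : {set 'M[F]_4} :=
  [set H in planes | (H \notin oscs) && (ncurve H == 1)%N].
Definition HC5 : {set 'M[F]_4} := [set H in planes | ncurve H == 0%N].

Definition OD0 (l : 'M[F]_4) : seq nat :=
  [seq #|[set P in X | incid P l]| | X : {set 'M[F]_4} <- [:: PC1; PC2; PC3; PC4; PC5]].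
Definition OD2 (l : 'M[F]_4) : seq nat :=
  [seq #|[set H in X | incid l H]| | X : {set 'M[F]_4} <- [:: HC1; HC2; HC3; HC4; HC5]].

(* the group G: image of PGL(2,q); g = (a,b,c,d) with ad - bc != 0 *)
Definition gmx_abcd (a b c d : F) : 'M[F]_4 :=
  \matrix_(i < 4, j < 4) nth 0 (nth [::]
    [:: [:: a ^+ 3; a ^+ 2 * b; a * b ^+ 2; b ^+ 3];
        [:: 3%:R * a ^+ 2 * c; a ^+ 2 * d + 2%:R * a * b * c;
            b ^+ 2 * c + 2%:R * a * b * d; 3%:R * b ^+ 2 * d];
        [:: 3%:R * a * c ^+ 2; b * c ^+ 2 + 2%:R * a * c * d;
            a * d ^+ 2 + 2%:R * b * c * d; 3%:R * b * d ^+ 2];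
        [:: c ^+ 3; c ^+ 2 * d; c * d ^+ 2; d ^+ 3]] i) j.

Definition gmx (g : F * F * F * F) : 'M[F]_4 :=
  gmx_abcd g.1.1.1 g.1.1.2 g.1.2 g.2.

Definition Gset : {set F * F * F * F} :=
  [set g | g.1.1.1 * g.2 - g.1.1.2 * g.1.2 != 0].

Definition gact (g : F * F * F * F) (S : 'M[F]_4) : 'M[F]_4 :=
  <<S *m gmx g>>%MS.

Definition L3 : {set 'M[F]_4} :=
  [set l in lines | [&& ncurve l == 1%N, [exists t, incid l (osc t)]
                     & l \notin tangents]].

End TwistedCubic.

From Pilot Require Import Defs.
From HB Require Import structures.
From mathcomp Require Import all_boot all_order all_algebra.
From mathcomp Require Import ring.
Set Implicit Arguments. Unset Strict Implicit. Unset Printing Implicit Defensive.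
Import GRing.Theory.
Local Open Scope ring_scope.

(* Subspaces of PG(3,q) are canonical matrices <<S>>; G acts by S |-> <<S M_g>>.
   1. G acts on subspaces preserving rank and inclusion, and it transforms the
      curve point, the tangent line and the osculating plane at parameter t
      into those at the Moebius image phi g t.  Hence every point and plane
      class is G-stable, the counts OD0 and OD2 are constant on G-orbits, and
      L3 is G-stable.
   2. Normal form: the line l0 : Y0 = Y2 = 0 lies in L3; moving the osculating
      plane containing l in L3 to Pi(oo), and then translating the parameter
      line (using 2 != 0), carries l0 onto l.
   3. On l0 we count directly: its points are P(oo) and pt m = (0,1,0,m), with
      1 + #{t | t^2 = -m/3} osculating planes through pt m; the planes through
      l0 are Pi(oo) and hp l : l Y0 = Y2, meeting the curve in P(oo) and the
      P(t) with t^2 = l.  Counting squares in F (odd q) gives both lists. *)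
From Pilot Require Import Defs.
From HB Require Import structures.
From mathcomp Require Import all_boot all_order all_algebra.
From mathcomp Require Import ring.
Set Implicit Arguments. Unset Strict Implicit. Unset Printing Implicit Defensive.
Import GRing.Theory.
Local Open Scope ring_scope.

Section CanonicalSubspaces.
Variables (K : fieldType) (n : nat).

Definition canon (S : 'M[K]_n) : bool := (<<S>>%MS == S).

Lemma canon_gen m (S : 'M[K]_(m, n)) : canon <<S>>%MS.
Proof. by rewrite /canon genmx_id. Qed.

Lemma canon_eq (A B : 'M[K]_n) : canon A -> canon B -> (A <= B)%MS ->
  (\rank B <= \rank A)%N -> A = B.
Proof.
move=> /eqP cA /eqP cB sAB rBA.
have := geq_leqif (mxrank_leqif_eq sAB); rewrite rBA => /esym /genmxP eAB.
by rewrite -cA eAB cB.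
Qed.

Lemma gen_scale m (A : 'M[K]_(m, n)) a : a != 0 -> <<a *: A>>%MS = <<A>>%MS.
Proof. by move=> a0; apply: eq_genmx; apply: eqmx_scale. Qed.

Lemma sub_col_mxl m1 m2 (A : 'M[K]_(m1, n)) (B : 'M[K]_(m2, n)) : (A <= col_mx A B)%MS.
Proof. by rewrite -addsmxE addsmxSl. Qed.

Lemma sub_col_mxr m1 m2 (A : 'M[K]_(m1, n)) (B : 'M[K]_(m2, n)) : (B <= col_mx A B)%MS.
Proof. by rewrite -addsmxE addsmxSr. Qed.

Lemma sub_col_mx2P (v a b : 'rV[K]_n) :
  (v <= col_mx a b)%MS -> exists al be, v = al *: a + be *: b.
Proof.
case/submxP => D ->; exists (lsubmx D 0 0), (rsubmx D 0 0).
rewrite -[D]hsubmxK mul_row_col row_mxKl row_mxKr.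
by rewrite {1}[lsubmx D]mx11_scalar {1}[rsubmx D]mx11_scalar !mul_scalar_mx.
Qed.

Lemma canon_rank1 (P : 'M[K]_n) : canon P -> \rank P = 1%N ->
  exists2 v : 'rV[K]_n, v != 0 & P = <<v>>%MS.
Proof.
move=> cP rP; have /rowV0Pn[v vP nv] : P != 0 by rewrite -mxrank_eq0 rP.
exists v => //; symmetry; apply: canon_eq; rewrite ?canon_gen ?genmxE //.
by rewrite rP rank_rV nv.
Qed.

Lemma rank_kerw (w : 'cV[K]_n) : w != 0 -> \rank <<kermx w>>%MS = (n - 1)%N.
Proof. by move=> nw; rewrite genmxE mxrank_ker -mxrank_tr rank_rV trmx_eq0 nw. Qed.

Lemma canon_hyperplane (H : 'M[K]_n) : canon H -> \rank H = (n - 1)%N ->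
  (0 < n)%N -> exists2 w : 'cV[K]_n, w != 0 & H = <<kermx w>>%MS.
Proof.
move=> cH rH n0.
have /rowV0Pn[v /submxP[D eD] nv] : (cokermx H)^T != 0.
  by rewrite trmx_eq0 -mxrank_eq0 mxrank_coker rH subKn.
exists v^T; first by rewrite trmx_eq0.
apply: canon_eq; rewrite ?canon_gen ?rank_kerw ?rH ?trmx_eq0 //.
by rewrite genmxE sub_kermx eD trmx_mul trmxK mulmxA mulmx_coker mul0mx.
Qed.

Lemma ker_scale (w : 'cV[K]_n) a : a != 0 -> <<kermx (a *: w)>>%MS = <<kermx w>>%MS.
Proof.
move=> a0; apply/genmxP/andP; split; rewrite sub_kermx.
  by have := mulmx_ker (a *: w); rewrite -scalemxAr => /eqP; rewrite scaler_eq0 (negbTE a0).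
by rewrite -scalemxAr mulmx_ker scaler0.
Qed.
End CanonicalSubspaces.

Section Squares.
Variable K : finFieldType.
Hypothesis two_neq0 : (2%:R : K) != 0.

Definition sqset (c : K) : {set K} := [set m | (m != 0) && [exists t, t ^+ 2 == c * m]].
Definition nsqset (c : K) : {set K} := [set m | (m != 0) && ~~ [exists t, t ^+ 2 == c * m]].

Lemma card_sqrt (t0 : K) : t0 != 0 -> #|[set t | t ^+ 2 == t0 ^+ 2]| = 2%N.
Proof.
move=> t00; have -> : [set t | t ^+ 2 == t0 ^+ 2] = [set t0; - t0].
  by apply/setP => t; rewrite !inE eqf_sqr.
rewrite cards2; suff -> : t0 != - t0 by [].
apply/negP => /eqP e.
have : 2%:R * t0 = 0 by rewrite mulr2n mulrDl mul1r {1}e addNr.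
by move/eqP; rewrite mulf_eq0 (negbTE two_neq0) (negbTE t00).
Qed.

Lemma sqset_root (c m : K) : c != 0 -> m \in sqset c ->
  exists2 t0, t0 != 0 & t0 ^+ 2 = c * m.
Proof.
move=> c0; rewrite inE => /andP[m0 /existsP[t0 /eqP e]]; exists t0 => //.
by apply: contraNneq (mulf_neq0 c0 m0) => t00; rewrite -e t00 expr0n.
Qed.

Lemma card_roots (c m : K) : c != 0 -> #|[set t | t ^+ 2 == c * m]| =
  if m == 0 then 1%N else if m \in sqset c then 2%N else 0%N.
Proof.
move=> c0; have [-> | m0] := eqVneq m 0.
  rewrite (_ : [set t | _] = [set 0]) ?cards1 //.
  by apply/setP => t; rewrite !inE mulr0 sqrf_eq0.
case: ifP => [/(sqset_root c0)[t0 t00 <-] | ]; first exact: card_sqrt.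
rewrite inE m0 /= => /negbT /existsPn nex; apply/eqP; rewrite cards_eq0.
by apply/eqP/setP => t; rewrite !inE (negbTE (nex t)).
Qed.

Lemma card_sqset_double (c : K) : c != 0 -> (#|sqset c|).*2 = #|K|.-1.
Proof.
move=> c0.
have -> : #|K|.-1 = (\sum_(t : K | t != 0%R) 1)%N.
  by rewrite sum1_card -(cardsC1 (0 : K)); apply: eq_card => t; rewrite !inE.
rewrite (partition_big (fun t => t ^+ 2 / c) (mem (sqset c))); last first.
  move=> t t0; rewrite !inE mulf_neq0 ?expf_neq0 ?invr_eq0 //=.
  by apply/existsP; exists t; rewrite mulrC divfK.
rewrite -sum1_card -muln2 big_distrl /=; apply: eq_bigr => m mS.
have [t0 t00 e] := sqset_root c0 mS; have m0 : m != 0 by move: mS; rewrite inE => /andP[].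
rewrite mul1n sum1dep_card -[LHS](card_sqrt t00); apply: eq_card => t; rewrite !inE e.
apply/eqP/andP => [et | [_ /eqP <-]]; last by rewrite mulrC divfK.
split; last by rewrite et mulrC mulKf.
by apply: contraNneq (mulf_neq0 c0 m0) => t0'; rewrite -et t0' expr0n.
Qed.

Lemma card_sqset (c : K) : c != 0 -> #|sqset c| = (#|K|.-1)./2.
Proof. by move=> c0; rewrite -(card_sqset_double c0) doubleK. Qed.

Lemma card_nsqset (c : K) : c != 0 -> #|nsqset c| = (#|K|.-1)./2.
Proof.
move=> c0; have := cardsID [set m : K | [exists t, t ^+ 2 == c * m]] [set m : K | m != 0].
have -> : [set m : K | m != 0] :&: [set m | [exists t, t ^+ 2 == c * m]] = sqset c.
  by apply/setP => m; rewrite !inE.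
have -> : [set m : K | m != 0] :\: [set m | [exists t, t ^+ 2 == c * m]] = nsqset c.
  by apply/setP => m; rewrite !inE andbC.
have -> : #|[set m : K | m != 0]| = #|K|.-1.
  by rewrite -(cardsC1 (0 : K)); apply: eq_card => t; rewrite !inE.
move=> card_nonzero; rewrite -(card_sqset c0); apply/eqP.
by rewrite -(eqn_add2l #|sqset c|) card_nonzero addnn card_sqset_double.
Qed.
End Squares.

Lemma card_option (T : finType) (Q : pred (option T)) : Q None ->
  #|[set t | Q t]| = (#|[set t : T | Q (Some t)]|).+1.
Proof.
move=> QN; have -> : [set t | Q t] = None |: (Some @: [set t : T | Q (Some t)]).
  apply/setP => -[t|]; rewrite !inE ?QN //=.
  by apply/idP/imsetP => [Qt | [u]]; [exists t; rewrite ?inE | rewrite inE => Qu [->]].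
rewrite cardsU1 card_imset; last exact: Some_inj.
by case: imsetP => // -[].
Qed.

Section TwistedCubicOrbit.
Variable F : finFieldType.
Hypotheses (two_neq0 : (2%:R : F) != 0) (three_neq0 : (3%:R : F) != 0).
Implicit Types (g : F * F * F * F) (t : option F) (A B S : 'M[F]_4).

Lemma gmx_mul (a b c d a' b' c' d' : F) :
  gmx_abcd a b c d *m gmx_abcd a' b' c' d' =
  gmx_abcd (a * a' + b * c') (a * b' + b * d') (c * a' + d * c') (c * b' + d * d').
Proof.
apply/matrixP => i j; rewrite !mxE !big_ord_recl big_ord0 !mxE /=.
by case: i => [[|[|[|[|i]]]] hi] //=; case: j => [[|[|[|[|j]]]] hj] //=; ring.
Qed.

Lemma gmx_scalar (e : F) : gmx_abcd e 0 0 e = e ^+ 3 *: 1%:M.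
Proof.
apply/matrixP => i j; rewrite !mxE.
by case: i => [[|[|[|[|i]]]] hi] //=; case: j => [[|[|[|[|j]]]] hj] //=; ring.
Qed.

Definition detg g : F := g.1.1.1 * g.2 - g.1.1.2 * g.1.2.
Definition adjg g : F * F * F * F := (g.2, - g.1.1.2, - g.1.2, g.1.1.1).
Definition gmul g h : F * F * F * F :=
  let: (a, b, c, d) := g in let: (a', b', c', d') := h in
  (a * a' + b * c', a * b' + b * d', c * a' + d * c', c * b' + d * d').

Lemma inGset g : (g \in Gset F) = (detg g != 0).
Proof. by rewrite inE. Qed.

Lemma adjg_Gset g : g \in Gset F -> adjg g \in Gset F.
Proof.
case: g => [[[a b] c] d]; rewrite !inGset /detg /=.
by congr (~~ (_ == _)); ring.
Qed.

Lemma gmul_Gset g h : g \in Gset F -> h \in Gset F -> gmul g h \in Gset F.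
Proof.
case: g => [[[a b] c] d]; case: h => [[[a' b'] c'] d'].
rewrite !inGset /detg /= => g0 h0.
have -> : (a * a' + b * c') * (c * b' + d * d') - (a * b' + b * d') * (c * a' + d * c')
  = (a * d - b * c) * (a' * d' - b' * c') by ring.
by rewrite mulf_neq0.
Qed.

Lemma gmx_gmul g h : gmx g *m gmx h = gmx (gmul g h).
Proof. by case: g => [[[a b] c] d]; case: h => [[[a' b'] c'] d']; rewrite /gmx gmx_mul. Qed.

Lemma gmx_adjg g : gmx g *m gmx (adjg g) = detg g ^+ 3 *: 1%:M.
Proof.
case: g => [[[a b] c] d]; rewrite /gmx gmx_mul -gmx_scalar /detg /=.
by congr gmx_abcd; ring.
Qed.

Lemma rank_gmx g : g \in Gset F -> \rank (gmx g) = 4%N.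
Proof.
rewrite inGset => g0; apply/eqP; rewrite eqn_leq rank_leq_row /=.
have := mxrankM_maxl (gmx g) (gmx (adjg g)).
by rewrite gmx_adjg (eqmx_scale _ (expf_neq0 3 g0)) mxrank1.
Qed.

Lemma gen_mulmx m (S : 'M[F]_(m, 4)) (M : 'M[F]_4) : <<(<<S>> *m M)>>%MS = <<S *m M>>%MS.
Proof. by apply: eq_genmx; apply: eqmxMr; apply: genmxE. Qed.

Lemma gact_gact g h S : gact h (gact g S) = gact (gmul g h) S.
Proof. by rewrite /gact gen_mulmx -mulmxA gmx_gmul. Qed.

Lemma gactK g S : g \in Gset F -> canon S -> gact (adjg g) (gact g S) = S.
Proof.
rewrite inGset => g0 /eqP cS.
rewrite /gact gen_mulmx -mulmxA gmx_adjg scalemx1 mul_mx_scalar.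
by rewrite gen_scale ?expf_neq0.
Qed.

Lemma gact_canon g S : canon (gact g S).
Proof. exact: canon_gen. Qed.

Lemma rank_gact g S : g \in Gset F -> \rank (gact g S) = \rank S.
Proof. by move=> gG; rewrite /gact genmxE mxrankMfree // /row_free rank_gmx. Qed.

Lemma gact_sub g A B : (A <= B)%MS -> (gact g A <= gact g B)%MS.
Proof. by move=> sAB; rewrite /gact !genmxE submxMr. Qed.

Lemma gact_inj g A B : g \in Gset F -> canon A -> canon B ->
  gact g A = gact g B -> A = B.
Proof. by move=> gG cA cB e; rewrite -(gactK gG cA) e gactK. Qed.

Lemma subsp_gact g k S : g \in Gset F -> is_subsp k S -> is_subsp k (gact g S).
Proof.
by move=> gG /andP[_ rS]; apply/andP; split; [exact: gact_canon|rewrite rank_gact].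
Qed.

Definition phi g t : option F :=
  let: (a, b, c, d) := g in
  match t with
  | Some t => if a + c * t == 0 then None else Some ((b + d * t) / (a + c * t))
  | None => if c == 0 then None else Some (d / c)
  end.

Definition cv t : 'rV[F]_4 := if t is Some t then cvec t else cvec_inf F.
Definition dv t : 'rV[F]_4 := if t is Some t then dcvec t else dcvec_inf F.

Lemma cptE t : cpt t = <<cv t>>%MS.
Proof. by case: t. Qed.

Lemma tangentE t : tangent t = <<col_mx (cv t) (dv t)>>%MS.
Proof. by case: t. Qed.

Ltac rowcomp := apply/rowP; case=> [[|[|[|[|?]]]] ?];
  rewrite !mxE ?big_ord_recl ?big_ord0 ?mxE //=; rewrite ?mxE /= ?/bump /=.
Ltac colcomp := apply/colP; case=> [[|[|[|[|?]]]] ?];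
  rewrite !mxE ?big_ord_recl ?big_ord0 ?mxE //=; rewrite ?mxE /= ?/bump /=.

Lemma cv_gmx g t : g \in Gset F ->
  exists2 l, l != 0 & cv t *m gmx g = l *: cv (phi g t).
Proof.
case: g => [[[a b] c] d]; rewrite inGset /detg /gmx /= => g0.
case: t => [t|] /=.
  have [e|e] := eqVneq (a + c * t) 0; rewrite ?e ?eqxx ?(negbTE e).
    have ea : a = - (c * t) by rewrite -(subr0 a) -e; ring.
    subst a.
    have bd0 : b + d * t != 0.
      apply: contraNneq g0 => bd0.
      have -> : - (c * t) * d - b * c = - c * (b + d * t) by ring.
      by rewrite bd0 mulr0.
    exists ((b + d * t) ^+ 3); first by rewrite expf_neq0.
    by rowcomp; ring.
  exists ((a + c * t) ^+ 3); first by rewrite expf_neq0.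
  by rowcomp; field.
have [e|e] := eqVneq c 0; rewrite ?e ?eqxx ?(negbTE e).
  subst c.
  have d0 : d != 0 by apply: contraNneq g0 => ->; rewrite mulr0 mulr0 subr0.
  exists (d ^+ 3); first by rewrite expf_neq0.
  by rowcomp; ring.
exists (c ^+ 3); first by rewrite expf_neq0.
by rowcomp; field.
Qed.

Lemma dv_gmx g t : g \in Gset F ->
  exists al be, dv t *m gmx g = al *: cv (phi g t) + be *: dv (phi g t).
Proof.
case: g => [[[a b] c] d]; rewrite inGset /detg /gmx /= => g0.
case: t => [t|] /=.
  have [e|e] := eqVneq (a + c * t) 0; rewrite ?e ?eqxx ?(negbTE e).
    have ea : a = - (c * t) by rewrite -(subr0 a) -e; ring.
    subst a.
    exists (3%:R * d * (b + d * t) ^+ 2), (c * (b + d * t) ^+ 2).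
    by rowcomp; ring.
  exists (3%:R * c * (a + c * t) ^+ 2), ((a * d - b * c) * (a + c * t)).
  by rowcomp; field.
have [e|e] := eqVneq c 0; rewrite ?e ?eqxx ?(negbTE e).
  subst c.
  exists (3%:R * b * d ^+ 2), (a * d ^+ 2).
  by rowcomp; ring.
exists (3%:R * a * c ^+ 2), (b * c ^+ 2 - a * c * d).
by rowcomp; field.
Qed.

Lemma osc_gmx g t : g \in Gset F ->
  exists l, gmx g *m osc_fun (phi g t) = l *: osc_fun t.
Proof.
case: g => [[[a b] c] d]; rewrite inGset /detg /gmx /= => g0.
case: t => [t|] /=.
  have [e|e] := eqVneq (a + c * t) 0; rewrite ?e ?eqxx ?(negbTE e).
    have ea : a = - (c * t) by rewrite -(subr0 a) -e; ring.
    subst a.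
    by exists (c ^+ 3); colcomp; ring.
  by exists (((a * d - b * c) / (a + c * t)) ^+ 3); colcomp; field.
have [e|e] := eqVneq c 0; rewrite ?e ?eqxx ?(negbTE e).
  by subst c; exists (a ^+ 3); colcomp; ring.
by exists (- ((a * d - b * c) / c) ^+ 3); colcomp; field.
Qed.

Lemma canon_cpt t : canon (cpt t).
Proof. by rewrite cptE canon_gen. Qed.

Lemma canon_osc t : canon (osc t).
Proof. exact: canon_gen. Qed.

Lemma canon_tangent t : canon (tangent t).
Proof. by rewrite tangentE canon_gen. Qed.

Lemma rank_tangent t : (\rank (tangent t) <= 2)%N.
Proof. by rewrite tangentE genmxE rank_leq_row. Qed.

Lemma sub_osc m (A : 'M[F]_(m, 4)) t : (A <= osc t)%MS = (A *m osc_fun t == 0).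
Proof. by rewrite /osc genmxE sub_kermx. Qed.

Lemma osc_fun_neq0 t : osc_fun t != 0.
Proof.
apply/eqP => /matrixP e; move: (e (if t is Some _ then 3 else 0) 0).
by case: t {e} => [t|]; rewrite !mxE /= => /eqP; rewrite oner_eq0.
Qed.

Lemma rank_osc t : \rank (osc t) = 3%N.
Proof. by rewrite rank_kerw ?osc_fun_neq0. Qed.

Lemma gact_cpt g t : g \in Gset F -> gact g (cpt t) = cpt (phi g t).
Proof.
move=> gG; rewrite !cptE /gact gen_mulmx.
by have [l l0 ->] := cv_gmx t gG; rewrite gen_scale.
Qed.

Lemma gact_tangent g t : g \in Gset F ->
  (gact g (tangent t) <= tangent (phi g t))%MS.
Proof.
move=> gG; rewrite !tangentE /gact gen_mulmx !genmxE mul_col_mx col_mx_sub.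
have [l _ ->] := cv_gmx t gG; have [al [be ->]] := dv_gmx t gG.
by rewrite scalemx_sub ?addmx_sub ?scalemx_sub ?sub_col_mxl ?sub_col_mxr.
Qed.

Lemma gact_osc g t : g \in Gset F -> gact g (osc t) = osc (phi g t).
Proof.
move=> gG; apply: canon_eq; rewrite ?gact_canon ?canon_osc ?rank_gact ?rank_osc //.
rewrite /gact genmxE sub_osc -mulmxA; have [l ->] := osc_gmx t gG.
by rewrite -scalemxAr (eqP (_ : osc t *m osc_fun t == 0)) ?scaler0 // -sub_osc.
Qed.

Definition stable (X : {set 'M[F]_4}) : Prop :=
  {in X, forall A, canon A} /\ forall g, g \in Gset F -> {in X, forall A, gact g A \in X}.

Definition gcompat (R : rel 'M[F]_4) : Prop :=
  forall g A B, g \in Gset F -> R A B -> R (gact g A) (gact g B).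

Lemma gcompat_incid : gcompat (@incid F).
Proof. by move=> g A B _; apply: gact_sub. Qed.

Lemma gcompat_incidV : gcompat (fun A B => incid B A).
Proof. by move=> g A B _; apply: gact_sub. Qed.

Lemma canon_subsp k S : S \in [set S | is_subsp k S] -> canon S.
Proof. by rewrite inE => /andP[]. Qed.

Lemma stable_subsp k : stable [set S | is_subsp k S].
Proof. by split=> [A | g gG A]; [apply: canon_subsp | rewrite !inE; apply: subsp_gact]. Qed.

Lemma stable_sep X (P : pred 'M[F]_4) : stable X ->
  (forall g A, g \in Gset F -> A \in X -> P A -> P (gact g A)) ->
  stable [set A in X | P A].
Proof.
move=> [cX gX] gP; split=> [A | g gG A]; rewrite !inE => /andP[AX PA].
  exact: cX.
by rewrite gX ?gP.
Qed.

Lemma stable_family (f : option F -> 'M[F]_4) : (forall t, canon (f t)) ->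
  (forall g t, g \in Gset F -> gact g (f t) = f (phi g t)) ->
  stable [set f t | t : option F].
Proof.
move=> cf ef; split=> [_ /imsetP[t _ ->] // | g gG _ /imsetP[t _ ->]].
by rewrite ef ?imset_f.
Qed.

Lemma stable_curve : stable (curve F).
Proof. exact: stable_family canon_cpt gact_cpt. Qed.

Lemma stable_oscs : stable (oscs F).
Proof. exact: stable_family canon_osc gact_osc. Qed.

Lemma stable_notin X g A : stable X -> g \in Gset F -> canon A ->
  A \notin X -> gact g A \notin X.
Proof. by case=> _ gX gG cA; apply: contra => /(gX _ (adjg_Gset gG)); rewrite gactK. Qed.

Lemma card_gact X (R : rel 'M[F]_4) g B : stable X -> gcompat R ->
  g \in Gset F -> canon B ->
  #|[set A in X | R A (gact g B)]| = #|[set A in X | R A B]|.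
Proof.
move=> [cX gX] cR.
suff card_le h C : h \in Gset F ->
    (#|[set A in X | R A C]| <= #|[set A in X | R A (gact h C)]|)%N.
  move=> gG cB; apply/eqP; rewrite eqn_leq card_le // andbT.
  by have := card_le _ (gact g B) (adjg_Gset gG); rewrite gactK.
move=> hG; rewrite -(card_in_imset (f := gact h)); last first.
  by move=> A A'; rewrite !inE => /andP[/cX cA _] /andP[/cX cA' _]; apply: gact_inj.
apply: subset_leq_card; apply/subsetP => A' /imsetP[A]; rewrite !inE.
by case/andP=> AX RA ->; rewrite gX ?cR.
Qed.

Lemma ncurve_gact g S : g \in Gset F -> canon S -> ncurve (gact g S) = ncurve S.
Proof. exact: card_gact stable_curve gcompat_incid. Qed.

Lemma nosc_gact g S : g \in Gset F -> canon S -> nosc (gact g S) = nosc S.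
Proof. exact: card_gact stable_oscs gcompat_incidV. Qed.

Lemma stable_PCs : {in [:: PC1 F; PC2 F; PC3 F; PC4 F; PC5 F], forall X, stable X}.
Proof.
have notin_curve g A : g \in Gset F -> A \in points F ->
    A \notin curve F -> gact g A \notin curve F.
  by move=> gG /canon_subsp cA; apply: stable_notin stable_curve gG cA.
have stable_nosc k : stable [set P in points F | (P \notin curve F) && (nosc P == k)].
  apply: stable_sep (stable_subsp 1) _ => g A gG AP /andP[nA kA].
  by rewrite notin_curve //= nosc_gact // (canon_subsp AP).
move=> X; rewrite !inE => /orP[|/orP[|/orP[|/orP[|]]]] /eqP ->.
- exact: stable_curve.
- apply: stable_sep (stable_subsp 1) _ => g A gG AP /andP[nA /existsP[t At]].
  rewrite notin_curve //=; apply/existsP; exists (phi g t).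
  exact: submx_trans (gact_sub g At) (gact_tangent t gG).
- exact: stable_nosc.
- exact: stable_nosc.
- apply: stable_sep (stable_subsp 1) _ => g A gG AP /eqP kA.
  by rewrite nosc_gact ?kA // (canon_subsp AP).
Qed.

Lemma stable_HCs : {in [:: HC1 F; HC2 F; HC3 F; HC4 F; HC5 F], forall X, stable X}.
Proof.
have stable_ncurve k : stable [set H in planes F | ncurve H == k].
  apply: stable_sep (stable_subsp 3) _ => g A gG AP kA.
  by rewrite ncurve_gact // (canon_subsp AP).
move=> X; rewrite !inE => /orP[|/orP[|/orP[|/orP[|]]]] /eqP ->.
- exact: stable_oscs.
- exact: stable_ncurve.
- exact: stable_ncurve.
- apply: stable_sep (stable_subsp 3) _ => g A gG AP /andP[nA kA].
  rewrite ncurve_gact ?kA ?andbT ?(canon_subsp AP) //.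
  exact: stable_notin stable_oscs gG (canon_subsp AP) nA.
- exact: stable_ncurve.
Qed.

Lemma OD0_gact g l : g \in Gset F -> canon l -> OD0 (gact g l) = OD0 l.
Proof.
move=> gG cl; apply/eq_in_map => X /stable_PCs sX.
exact: card_gact sX gcompat_incid gG cl.
Qed.

Lemma OD2_gact g l : g \in Gset F -> canon l -> OD2 (gact g l) = OD2 l.
Proof.
move=> gG cl; apply/eq_in_map => X /stable_HCs sX.
exact: card_gact sX gcompat_incidV gG cl.
Qed.

Lemma tangents_gactV g l : g \in Gset F -> l \in lines F ->
  gact g l \in tangents F -> l \in tangents F.
Proof.
move=> gG; rewrite [l \in _]inE => /andP[cl /eqP rl] /imsetP[s _ es].
apply/imsetP; exists (phi (adjg g) s) => //.
apply: canon_eq; rewrite ?canon_tangent ?rl ?rank_tangent //.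
by rewrite -(gactK gG cl) es gact_tangent ?adjg_Gset.
Qed.

Lemma stable_L3 : stable (L3 F).
Proof.
apply: stable_sep (stable_subsp 2) _ => g l gG lL /and3P[nl /existsP[t lt] nt].
rewrite ncurve_gact ?nl ?(canon_subsp lL) //=; apply/andP; split.
  by apply/existsP; exists (phi g t); rewrite /incid -gact_osc ?gact_sub.
by apply: contra nt; apply: tangents_gactV.
Qed.

Definition rv4 (x0 x1 x2 x3 : F) : 'rV[F]_4 := \row_(i < 4) nth 0 [:: x0; x1; x2; x3] i.
Definition cw4 (y0 y1 y2 y3 : F) : 'cV[F]_4 := \col_(i < 4) nth 0 [:: y0; y1; y2; y3] i.

Lemma rv4E (v : 'rV[F]_4) : v = rv4 (v 0 0) (v 0 1) (v 0 2) (v 0 3).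
Proof. by apply/rowP; case=> [[|[|[|[|?]]]] ?]; rewrite mxE //=; congr (v _ _); apply: val_inj. Qed.

Lemma cw4E (w : 'cV[F]_4) : w = cw4 (w 0 0) (w 1 0) (w 2 0) (w 3 0).
Proof. by apply/colP; case=> [[|[|[|[|?]]]] ?]; rewrite mxE //=; congr (w _ _); apply: val_inj. Qed.

Lemma rv4_inj x0 x1 x2 x3 y0 y1 y2 y3 :
  rv4 x0 x1 x2 x3 = rv4 y0 y1 y2 y3 -> [/\ x0 = y0, x1 = y1, x2 = y2 & x3 = y3].
Proof.
move/rowP => e; have := e 0; have := e 1; have := e 2; have := e 3.
by rewrite !mxE /= => -> -> -> ->.
Qed.

Lemma rv4_scale a x0 x1 x2 x3 :
  a *: rv4 x0 x1 x2 x3 = rv4 (a * x0) (a * x1) (a * x2) (a * x3).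
Proof. by rowcomp. Qed.

Lemma rv4_lin a b x0 x1 x2 x3 y0 y1 y2 y3 :
  a *: rv4 x0 x1 x2 x3 + b *: rv4 y0 y1 y2 y3 =
  rv4 (a * x0 + b * y0) (a * x1 + b * y1) (a * x2 + b * y2) (a * x3 + b * y3).
Proof. by rowcomp. Qed.

Lemma rv4_eq0 x0 x1 x2 x3 :
  (rv4 x0 x1 x2 x3 == 0) = [&& x0 == 0, x1 == 0, x2 == 0 & x3 == 0].
Proof.
have -> : 0 = rv4 0 0 0 0 by rowcomp.
by apply/eqP/and4P => [/rv4_inj[-> -> -> ->] | [/eqP-> /eqP-> /eqP-> /eqP->]].
Qed.

Lemma mx11_eq0 (A : 'M[F]_1) : (A == 0) = (A 0 0 == 0).
Proof.
apply/eqP/eqP => [-> | A0]; first by rewrite mxE.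
by apply/matrixP => i j; rewrite !ord1 A0 mxE.
Qed.

Lemma rv_cw x0 x1 x2 x3 y0 y1 y2 y3 :
  (rv4 x0 x1 x2 x3 *m cw4 y0 y1 y2 y3 == 0) = (x0 * y0 + x1 * y1 + x2 * y2 + x3 * y3 == 0).
Proof.
by rewrite mx11_eq0 !mxE !big_ord_recl big_ord0 !mxE /= /bump /=; congr (_ == _); ring.
Qed.

Lemma cvecE (t : F) : cvec t = rv4 1 t (t ^+ 2) (t ^+ 3).
Proof. by rowcomp; ring. Qed.
Lemma dcvecE (t : F) : dcvec t = rv4 0 1 (2%:R * t) (3%:R * t ^+ 2).
Proof. by rowcomp; ring. Qed.
Lemma cvec_infE : cvec_inf F = rv4 0 0 0 1.
Proof. by rowcomp. Qed.
Lemma dcvec_infE : dcvec_inf F = rv4 0 0 1 0.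
Proof. by rowcomp. Qed.

Lemma osc_funE t : osc_fun t = if t is Some t
  then cw4 (- t ^+ 3) (3%:R * t ^+ 2) (- (3%:R * t)) 1 else cw4 1 0 0 0.
Proof. by case: t => [t|]; colcomp. Qed.

Lemma sub_ker_rv x0 x1 x2 x3 (w : 'cV[F]_4) :
  (rv4 x0 x1 x2 x3 <= <<kermx w>>)%MS = (rv4 x0 x1 x2 x3 *m w == 0).
Proof. by rewrite genmxE sub_kermx. Qed.

Lemma sub_oscN x0 x1 x2 x3 : (rv4 x0 x1 x2 x3 <= osc None)%MS = (x0 == 0).
Proof. by rewrite sub_osc osc_funE rv_cw; congr (_ == _); ring. Qed.

Lemma cpt_osc t s : (cpt t <= osc s)%MS = (t == s).
Proof.
rewrite cptE genmxE sub_osc osc_funE.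
case: t => [t|]; case: s => [s|]; rewrite /= ?cvecE ?cvec_infE rv_cw.
- have -> : 1 * - s ^+ 3 + t * (3%:R * s ^+ 2) + t ^+ 2 * - (3%:R * s) + t ^+ 3 * 1
    = (t - s) ^+ 3 by ring.
  by rewrite expf_eq0 /= subr_eq0.
- by rewrite (_ : _ + _ = 1) ?oner_eq0 //; ring.
- by rewrite (_ : _ + _ = 1) ?oner_eq0 //; ring.
- by rewrite (_ : _ + _ = 0) ?eqxx //; ring.
Qed.

Lemma osc_inj : injective (@osc F).
Proof. by move=> t s e; apply/eqP; rewrite -cpt_osc -e cpt_osc. Qed.

Lemma cpt_inj : injective (@cpt F).
Proof. by move=> t s e; apply/eqP; rewrite -cpt_osc e cpt_osc. Qed.

(* The representative line l0 : Y0 = Y2 = 0, joining P(oo) = (0,0,0,1) and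
   the point (0,1,0,0) of the tangent line at P(0). *)
Definition K0 : 'M[F]_(4, 2) := \matrix_(i < 4, j < 2)
  (if ((i == 0 :> nat) && (j == 0 :> nat)) || ((i == 2 :> nat) && (j == 1 :> nat))
   then 1 else 0).
Definition l0 : 'M[F]_4 := <<kermx K0>>%MS.

Lemma sub_l0_rv x0 x1 x2 x3 : (rv4 x0 x1 x2 x3 <= l0)%MS = (x0 == 0) && (x2 == 0).
Proof.
rewrite /l0 genmxE sub_kermx; apply/eqP/andP => [/rowP e | [/eqP e0 /eqP e2]].
  move: (e 0) (e 1); rewrite !mxE !big_ord_recl !big_ord0 !mxE /= /bump /=.
  by rewrite !(mulr0, mulr1, addr0, add0r) => -> ->.
apply/rowP; case=> [[|[|?]] ?]; rewrite !mxE !big_ord_recl !big_ord0 !mxE //= /bump /=.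
  by rewrite e0 !(mulr0, mulr1, addr0, add0r).
by rewrite e2 !(mulr0, mulr1, addr0, add0r).
Qed.

Lemma sub_l0 (v : 'rV[F]_4) : (v <= l0)%MS = (v 0 0 == 0) && (v 0 2 == 0).
Proof. by rewrite {1}[v]rv4E sub_l0_rv. Qed.

Lemma rank_l0 : \rank l0 = 2%N.
Proof.
rewrite /l0 genmxE mxrank_ker.
suff -> : \rank K0 = 2%N by [].
apply/eqP; rewrite eqn_leq rank_leq_col /=.
have e : K0^T *m K0 = 1%:M.
  apply/matrixP; case=> [[|[|?]] ?]; case=> [[|[|?]] ?];
  rewrite !mxE !big_ord_recl !big_ord0 !mxE //= /bump /=;
  by rewrite !(mulr0, mulr1, addr0, add0r).
by move: (mxrankM_maxr K0^T K0); rewrite e mxrank1.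
Qed.

Lemma canon_l0 : canon l0.
Proof. exact: canon_gen. Qed.

Lemma l0_line : l0 \in lines F.
Proof. by rewrite inE; apply/andP; split; [exact: canon_l0 | rewrite rank_l0]. Qed.

Lemma l0_oscN : (l0 <= osc None)%MS.
Proof. by apply/rV_subP => v; rewrite [v]rv4E sub_l0_rv sub_oscN => /andP[]. Qed.

Lemma cpt_l0 t : (cpt t <= l0)%MS = (t == None).
Proof.
apply/idP/eqP => [tl | ->]; last by rewrite cptE genmxE /= cvec_infE sub_l0_rv !eqxx.
by apply/eqP; rewrite -cpt_osc (submx_trans tl l0_oscN).
Qed.

Lemma curve_l0 : [set P in curve F | incid P l0] = [set cpt None].
Proof.
apply/setP => P; rewrite !inE; apply/andP/eqP => [[/imsetP[t _ ->]] | ->].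
  by rewrite /incid cpt_l0 => /eqP ->.
by rewrite /incid cpt_l0 imset_f.
Qed.

Lemma l0_L3 : l0 \in L3 F.
Proof.
rewrite inE l0_line /ncurve curve_l0 cards1 /=; apply/andP; split.
  by apply/existsP; exists None; apply: l0_oscN.
apply/imsetP => -[t _ e].
case: t e => [t|] e.
  have : (cv (Some t) <= l0)%MS by rewrite e tangentE genmxE sub_col_mxl.
  by rewrite /= cvecE sub_l0_rv oner_eq0.
have : (dv None <= l0)%MS by rewrite e tangentE genmxE sub_col_mxr.
by rewrite /= dcvec_infE sub_l0_rv oner_eq0 andbF.
Qed.

(* A line through P(oo) in the osculating plane Pi(oo), other than the
   tangent line at P(oo), is the image of l0 under a translation
   t |-> t + y/2 of the parameter line (this is where 2 != 0 is used). *)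
Lemma oscN_line_orbit (l : 'M[F]_4) : canon l -> \rank l = 2%N ->
  (l <= osc None)%MS -> (cv None <= l)%MS -> l != tangent None ->
  exists2 g, g \in Gset F & l = gact g l0.
Proof.
move=> cl rl lo el nt.
have nT : ~~ (l <= tangent None)%MS.
  apply: contra nt => sT; apply/eqP; apply: canon_eq; rewrite ?canon_tangent //.
  by rewrite rl rank_tangent.
have [i ni] := row_subPn nT; set v := row i l in ni.
have vl : (v <= l)%MS by apply: row_sub.
have := submx_trans vl lo; move: ni vl; rewrite [v]rv4E.
move: (v 0 0) (v 0 1) (v 0 2) (v 0 3) => x0 x1 x2 x3 ni vl; rewrite sub_oscN => /eqP x00.
subst x0.
have x1n : x1 != 0.
  apply: contra ni => /eqP x10; subst x1.
  have -> : rv4 0 0 x2 x3 = x2 *: dv None + x3 *: cv None.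
    by rewrite /= dcvec_infE cvec_infE rv4_lin; congr rv4; ring.
  by rewrite tangentE genmxE addmx_sub // scalemx_sub ?sub_col_mxl ?sub_col_mxr.
set y := x2 / x1; pose g : F * F * F * F := (1, y / 2%:R, 0, 1).
have gG : g \in Gset F by rewrite inGset /detg /= mulr1 mulr0 subr0 oner_eq0.
exists g => //; symmetry; apply: canon_eq; rewrite ?gact_canon ?rank_gact ?rank_l0 ?rl //.
rewrite /gact genmxE; apply/row_subP => j; rewrite row_mul.
have := row_sub j l0; rewrite sub_l0 => /andP[/eqP r0 /eqP r2].
rewrite [row j l0]rv4E r0 r2; move: (row j l0 0 1) (row j l0 0 3) => r1 r3.
have -> : rv4 0 r1 0 r3 *m gmx g =
    (r1 / x1) *: rv4 0 x1 x2 x3 + (r1 * (3%:R * (y / 2%:R) ^+ 2 - x3 / x1) + r3) *: cv None.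
  by rewrite /= cvec_infE /g /gmx /=; rowcomp; rewrite /y; field; rewrite ?x1n ?two_neq0.
by rewrite addmx_sub // scalemx_sub.
Qed.

Definition to_inf t : F * F * F * F :=
  if t is Some t0 then (- t0, 1, 1, 0) else (1, 0, 0, 1).

Lemma to_inf_Gset t : to_inf t \in Gset F.
Proof.
rewrite inGset /detg; case: t => [t0|] /=.
  by rewrite mulr0 mul1r sub0r oppr_eq0 oner_eq0.
by rewrite mulr1 mulr0 subr0 oner_eq0.
Qed.

Lemma phi_to_inf t : phi (to_inf t) t = None.
Proof. by case: t => [t0|] /=; rewrite ?mul1r ?addNr eqxx. Qed.

Lemma L3_orbit l : l \in L3 F ->
  exists2 g, g \in Gset F & l = gact g l0.
Proof.
move=> lL; have := lL; rewrite inE => /and4P[ll _ /existsP[t lt] _].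
have cl : canon l := canon_subsp ll.
pose g1 := to_inf t; have g1G : g1 \in Gset F by apply: to_inf_Gset.
have := (stable_L3.2 _ g1G) l lL; rewrite inE => /and4P[ll1 nl1 _ nt1].
set l1 := gact g1 l in ll1 nl1 nt1.
have lo : (l1 <= osc None)%MS by rewrite -(phi_to_inf t) -gact_osc ?gact_sub.
have el : (cv None <= l1)%MS.
  have : (0 < ncurve l1)%N by rewrite (eqP nl1).
  rewrite card_gt0 => /set0Pn[P]; rewrite !inE => /andP[/imsetP[u _ ->] ul].
  have := submx_trans ul lo; rewrite cpt_osc => /eqP eu; subst u.
  by move: ul; rewrite /incid cptE genmxE.
have [g2 g2G e2] : exists2 g, g \in Gset F & l1 = gact g l0.
  apply: oscN_line_orbit; rewrite ?gact_canon //.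
    by move: ll1; rewrite inE => /andP[_ /eqP].
  by apply: contra nt1 => /eqP ->; apply: imset_f.
exists (gmul g2 (adjg g1)); first by rewrite gmul_Gset ?adjg_Gset.
by rewrite -gact_gact -e2 /l1 gactK.
Qed.

Lemma ncurveE S : ncurve S = #|[set t | (cpt t <= S)%MS]|.
Proof.
rewrite /ncurve -(card_imset _ cpt_inj); apply: eq_card => P; rewrite !inE.
apply/andP/imsetP => [[/imsetP[t _ ->] tS] | [t]]; first by exists t; rewrite ?inE.
by rewrite inE => tS ->; split; [apply: imset_f |].
Qed.

Lemma noscE (P : 'M[F]_4) : nosc P = #|[set t | (P <= osc t)%MS]|.
Proof.
rewrite /nosc -(card_imset _ osc_inj); apply: eq_card => H; rewrite !inE.
apply/andP/imsetP => [[/imsetP[t _ ->] Pt] | [t]]; first by exists t; rewrite ?inE.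
by rewrite inE => Pt ->; split; [apply: imset_f |].
Qed.

Definition pt (m : F) : 'M[F]_4 := <<rv4 0 1 0 m>>%MS.

Lemma pt_point m : is_subsp 1 (pt m).
Proof.
apply/andP; split; first exact: canon_gen.
by rewrite genmxE rank_rV rv4_eq0 oner_eq0 andbF.
Qed.

Lemma pt_l0 m : (pt m <= l0)%MS.
Proof. by rewrite /pt genmxE sub_l0_rv !eqxx. Qed.

Lemma points_l0 P : is_subsp 1 P -> (P <= l0)%MS -> P = cpt None \/ exists m, P = pt m.
Proof.
move=> /andP[cP /eqP rP]; have [v + ->] := canon_rank1 cP rP.
rewrite genmxE [v]rv4E sub_l0_rv rv4_eq0.
move: (v 0 0) (v 0 1) (v 0 2) (v 0 3) => x0 x1 x2 x3 nv /andP[/eqP x00 /eqP x20].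
subst x0 x2; rewrite !eqxx /= in nv.
have [x10 | x1n] := eqVneq x1 0.
  subst x1; rewrite eqxx /= in nv; left; rewrite cptE /= cvec_infE.
  by rewrite -[RHS](gen_scale _ nv) rv4_scale !mulr0 mulr1.
right; exists (x3 / x1); rewrite /pt -[RHS](gen_scale _ x1n) rv4_scale.
by rewrite !mulr0 mulr1 mulrCA divff ?mulr1.
Qed.

Lemma pt_inj : injective pt.
Proof.
move=> m m' e; have : (rv4 0 1 0 m <= pt m')%MS by rewrite -e /pt genmxE.
rewrite /pt genmxE => /sub_rVP[a]; rewrite rv4_scale => /rv4_inj[_ + _ ->].
by rewrite mulr1 => <-; rewrite mul1r.
Qed.

Lemma pt_curve m : pt m \notin curve F.
Proof.
apply/imsetP => -[t _ e]; have := pt_l0 m; rewrite e cpt_l0 => /eqP et; subst t.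
have : (rv4 0 1 0 m <= cpt None)%MS by rewrite -e /pt genmxE.
rewrite cptE genmxE /= cvec_infE => /sub_rVP[a]; rewrite rv4_scale => /rv4_inj[_ a1 _ _].
by move/eqP: a1; rewrite mulr0 oner_eq0.
Qed.

Lemma pt_tangent m : [exists t, incid (pt m) (tangent t)] = (m == 0).
Proof.
apply/existsP/eqP => [[t] | ->]; last first.
  exists (Some 0); rewrite /incid /pt tangentE !genmxE /=.
  by rewrite (_ : rv4 0 1 0 0 = dcvec 0) ?sub_col_mxr // dcvecE mulr0 expr0n /= mulr0.
rewrite /incid /pt tangentE !genmxE => /sub_col_mx2P[al [be]].
case: t => [t|] /=; rewrite ?cvecE ?dcvecE ?cvec_infE ?dcvec_infE rv4_lin.
  case/rv4_inj => e0 e1 e2 ->.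
  have al0 : al = 0 by rewrite [RHS]e0 mulr1 mulr0 addr0.
  move: e1 e2; rewrite al0 !mul0r !add0r mulr1 => <- /esym/eqP.
  by rewrite mul1r mulf_eq0 (negbTE two_neq0) /= => /eqP ->; rewrite expr0n /= !mulr0.
by case/rv4_inj => _ /eqP; rewrite !mulr0 addr0 oner_eq0.
Qed.

(* The constant -1/3 governing the osculating planes through pt m. *)
Definition c3 : F := - 3%:R^-1.

Lemma c3_neq0 : c3 != 0.
Proof. by rewrite oppr_eq0 invr_eq0. Qed.

Lemma nosc_pt m :
  nosc (pt m) = (#|[set t : F | t ^+ 2 == c3 * m]|).+1.
Proof.
rewrite noscE card_option; last by rewrite /pt genmxE sub_oscN.
congr _.+1; apply: eq_card => t; rewrite !inE /pt genmxE sub_osc osc_funE rv_cw.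
have -> : 0 * - t ^+ 3 + 1 * (3%:R * t ^+ 2) + 0 * - (3%:R * t) + m * 1
  = 3%:R * (t ^+ 2 - c3 * m) by rewrite /c3; field.
by rewrite mulf_eq0 (negbTE three_neq0) subr_eq0.
Qed.

(* Every point of l0 lies on Pi(oo), hence l0 has no point of class 5. *)
Lemma PC5_l0 : [set P in PC5 F | incid P l0] = set0.
Proof.
apply/setP => P; rewrite !inE; apply/negP => /andP[/andP[_ /eqP n0] Pl].
suff : (0 < nosc P)%N by rewrite n0.
by rewrite noscE card_gt0; apply/set0Pn; exists None; rewrite inE (submx_trans Pl l0_oscN).
Qed.

Lemma PC2_l0 : [set P in PC2 F | incid P l0] = [set pt 0].
Proof.
apply/setP => P; rewrite !inE; apply/idP/eqP => [| ->]; last first.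
  by rewrite pt_point pt_curve pt_tangent eqxx /incid pt_l0.
case/andP=> /and3P[PP nP PT] Pl; have [eP | [m eP]] := points_l0 PP Pl.
  by move: nP; rewrite eP imset_f.
by move: PT; rewrite eP pt_tangent => /eqP ->.
Qed.

Lemma PCk_l0 k (X : {set F}) : (forall m, (nosc (pt m) == k) = (m \in X)) ->
  [set P in [set P in points F | (P \notin curve F) && (nosc P == k)] | incid P l0]
   = pt @: X.
Proof.
move=> kX; apply/setP => P; rewrite !inE.
apply/idP/imsetP => [/andP[/and3P[PP nP kP] Pl] | [m mX ->]].
  have [eP | [m eP]] := points_l0 PP Pl; first by move: nP; rewrite eP imset_f.
  by exists m; rewrite // -kX -eP.
by rewrite pt_point pt_curve kX mX /incid pt_l0.
Qed.

Lemma nosc_pt_class m :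
  nosc (pt m) = if m == 0 then 2%N else if m \in sqset c3 then 3%N else 1%N.
Proof.
rewrite nosc_pt card_roots ?c3_neq0 //.
by case: (m == 0) => //; case: (m \in sqset c3).
Qed.

Lemma OD0_l0 :
  OD0 l0 = [:: 1%N; 1%N; (#|F|.-1)./2; (#|F|.-1)./2; 0%N].
Proof.
rewrite /OD0 /= /PC1 curve_l0 PC2_l0 PC5_l0 !cards1 cards0.
rewrite (@PCk_l0 3 (sqset c3)) => [|m]; last first.
  rewrite nosc_pt_class; have [-> | m0] := eqVneq m 0; first by rewrite inE eqxx.
  by case: ifP.
rewrite (@PCk_l0 1 (nsqset c3)) => [|m]; last first.
  rewrite nosc_pt_class !inE; have [-> | m0] := eqVneq m 0; first by [].
  by case: [exists t, _].
by rewrite !card_imset ?card_sqset ?card_nsqset ?c3_neq0 //; apply: pt_inj.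
Qed.

(* The planes through l0 other than Pi(oo) are the planes hp l : l Y0 = Y2. *)
Definition hp (l : F) : 'M[F]_4 := <<kermx (cw4 l 0 (-1) 0)>>%MS.

Lemma cw4_scale a y0 y1 y2 y3 :
  a *: cw4 y0 y1 y2 y3 = cw4 (a * y0) (a * y1) (a * y2) (a * y3).
Proof. by colcomp. Qed.

Lemma cw4_0 : cw4 0 0 0 0 = 0.
Proof. by colcomp. Qed.

Lemma planes_l0 H : is_subsp 3 H -> (l0 <= H)%MS -> H = osc None \/ exists l, H = hp l.
Proof.
case/andP=> cH /eqP rH; have [w + ->] := canon_hyperplane cH rH isT.
rewrite [w]cw4E; move: (w 0 0) (w 1 0) (w 2 0) (w 3 0) => y0 y1 y2 y3 w0 lH.
have /eqP y10 : rv4 0 1 0 0 *m cw4 y0 y1 y2 y3 == 0.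
  by rewrite -sub_ker_rv (submx_trans _ lH) // sub_l0_rv !eqxx.
have /eqP y30 : rv4 0 0 0 1 *m cw4 y0 y1 y2 y3 == 0.
  by rewrite -sub_ker_rv (submx_trans _ lH) // sub_l0_rv !eqxx.
move: y10 y30 => /eqP; rewrite rv_cw => /eqP y10 /eqP; rewrite rv_cw => /eqP y30.
have {y10} y10 : y1 = 0 by rewrite -[RHS]y10; ring.
have {y30} y30 : y3 = 0 by rewrite -[RHS]y30; ring.
subst y1 y3.
have [y20 | y2n] := eqVneq y2 0.
  subst y2; left; have y0n : y0 != 0.
    by apply: contraNneq w0 => ->; rewrite cw4_0.
  by rewrite /osc osc_funE -[RHS](ker_scale _ y0n) cw4_scale mulr1 mulr0.
right; exists (- y0 / y2); have y2n' : - y2 != 0 by rewrite oppr_eq0.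
rewrite /hp -[RHS](ker_scale _ y2n') cw4_scale mulr0 mulrN1 opprK.
by rewrite (_ : - y2 * (- y0 / y2) = y0) //; field.
Qed.

Lemma hp_plane l : is_subsp 3 (hp l).
Proof.
apply/andP; split; first exact: canon_gen.
rewrite rank_kerw //; apply/eqP => /colP/(_ 2); rewrite !mxE /=.
by apply/eqP; rewrite oppr_eq0 oner_eq0.
Qed.

Lemma l0_hp l : (l0 <= hp l)%MS.
Proof.
apply/rV_subP => v; rewrite sub_l0 => /andP[/eqP v0 /eqP v2].
by rewrite [v]rv4E v0 v2 sub_ker_rv rv_cw; apply/eqP; ring.
Qed.

Lemma hp_inj : injective hp.
Proof.
move=> l l' e; have : (rv4 1 0 l 0 <= hp l')%MS.
  by rewrite -e sub_ker_rv rv_cw; apply/eqP; ring.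
rewrite sub_ker_rv rv_cw => /eqP e'.
have : l' - l = 0 by rewrite -[RHS]e'; ring.
by move/eqP; rewrite subr_eq0 => /eqP ->.
Qed.

Lemma hp_oscs l : hp l \notin oscs F.
Proof.
apply/imsetP => -[t _ e].
have : (cpt None <= osc t)%MS by rewrite -e (submx_trans _ (l0_hp l)) ?cpt_l0.
rewrite cpt_osc => /eqP et; subst t.
have : (rv4 0 0 1 0 <= hp l)%MS by rewrite e sub_oscN.
by rewrite sub_ker_rv rv_cw (_ : _ + _ = -1) ?oppr_eq0 ?oner_eq0 //; ring.
Qed.

Lemma ncurve_hp l :
  ncurve (hp l) = if l == 0 then 2%N else if l \in sqset 1 then 3%N else 1%N.
Proof.
rewrite ncurveE card_option; last first.
  by rewrite cptE /hp /= cvec_infE genmxE sub_ker_rv rv_cw; apply/eqP; ring.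
suff -> : #|[set t : F | (cpt (Some t) <= hp l)%MS]| = #|[set t : F | t ^+ 2 == 1 * l]|.
  by rewrite card_roots ?oner_neq0 //; case: (l == 0) => //; case: (l \in sqset 1).
apply: eq_card => t; rewrite !inE cptE /hp /= cvecE genmxE sub_ker_rv rv_cw.
have -> : 1 * l + t * 0 + t ^+ 2 * -1 + t ^+ 3 * 0 = - (t ^+ 2 - 1 * l) by ring.
by rewrite oppr_eq0 subr_eq0.
Qed.

Lemma ncurve_oscN : ncurve (osc (None : option F)) = 1%N.
Proof.
rewrite ncurveE (_ : [set t | _] = [set None]) ?cards1 //.
by apply/setP => t; rewrite !inE cpt_osc.
Qed.

Lemma HC1_l0 : [set H in HC1 F | incid l0 H] = [set osc None].
Proof.
apply/setP => H; rewrite !inE; apply/andP/eqP => [[/imsetP[t _ ->] l0t] | ->].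
  by congr osc; apply/eqP; rewrite eq_sym -cpt_osc (submx_trans _ l0t) ?cpt_l0.
by rewrite imset_f // /incid l0_oscN.
Qed.

Lemma HCk_l0 k (X : {set F}) : (forall l, (ncurve (hp l) == k) = (l \in X)) ->
  (k != 1)%N -> [set H in [set H in planes F | ncurve H == k] | incid l0 H] = hp @: X.
Proof.
move=> kX k1; apply/setP => H; rewrite !inE.
apply/idP/imsetP => [/andP[/andP[HP kH] lH] | [l lX ->]].
  have [eH | [l eH]] := planes_l0 HP lH; first by move: kH k1; rewrite eH ncurve_oscN => /eqP <-.
  by exists l; rewrite // -kX -eH.
by rewrite hp_plane kX lX /incid l0_hp.
Qed.

Lemma HC4_l0 : [set H in HC4 F | incid l0 H] = hp @: nsqset 1.
Proof.
apply/setP => H; rewrite !inE.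
apply/idP/imsetP => [/andP[/and3P[HP nH kH] lH] | [l lX ->]].
  have [eH | [l eH]] := planes_l0 HP lH; first by move: nH; rewrite eH imset_f.
  exists l => //; move: kH; rewrite eH ncurve_hp !inE.
  by case: (l == 0) => //=; case: [exists t, _].
rewrite hp_plane hp_oscs ncurve_hp /incid l0_hp andbT.
by move: lX; rewrite !inE => /andP[/negbTE -> /negbTE ->].
Qed.

Lemma OD2_l0 :
  OD2 l0 = [:: 1%N; 1%N; (#|F|.-1)./2; (#|F|.-1)./2; 0%N].
Proof.
rewrite /OD2 /= HC1_l0 cards1 HC4_l0.
rewrite (@HCk_l0 2 [set 0]) // => [|l]; last first.
  by rewrite ncurve_hp !inE; case: (l == 0) => //; case: ifP.
rewrite (@HCk_l0 3 (sqset 1)) // => [|l]; last first.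
  rewrite ncurve_hp; have [-> | l0] := eqVneq l 0; first by rewrite inE eqxx.
  by case: ifP.
rewrite (@HCk_l0 0 set0) // => [|l]; last first.
  by rewrite ncurve_hp in_set0; case: ifP => //; case: ifP.
by rewrite !card_imset ?cards1 ?cards0 ?card_sqset ?card_nsqset ?oner_neq0 //; apply: hp_inj.
Qed.
End TwistedCubicOrbit.

Lemma pchar_nat_neq0 (F : fieldType) (p k : nat) : p \in [pchar F] -> prime k ->
  p != k -> (k%:R : F) != 0.
Proof.
move=> pF k_pr pk; apply: contra pk => /eqP k0.
have : k \in [pchar F] by rewrite inE k_pr k0 eqxx.
by rewrite (pcharf_eq pF) inE eq_sym.
Qed.

Theorem mainTheorem3 (F : finFieldType) (p : nat)
    (hp : p \in [pchar F]) (hp2 : p != 2%N) (hp3 : p != 3%N) :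
  (exists2 l0, l0 \in L3 F & L3 F = [set gact g l0 | g in Gset F]) /\
  (forall l, l \in L3 F ->
     OD2 l = OD0 l /\
     OD0 l = [:: 1%N; 1%N; (#|F|.-1)./2; (#|F|.-1)./2; 0%N]).
Proof.
have two0 : (2%:R : F) != 0 by apply: pchar_nat_neq0 hp _ hp2.
have three0 : (3%:R : F) != 0 by apply: pchar_nat_neq0 hp _ hp3.
split.
  exists (l0 F); first exact: l0_L3.
  apply/setP => l; apply/idP/imsetP => [/(L3_orbit two0)[g gG ->] | [g gG ->]].
    by exists g.
  exact: (stable_L3 F).2 g gG _ (l0_L3 F).
move=> l /(L3_orbit two0)[g gG ->].
by rewrite OD2_gact ?OD0_gact ?canon_l0 // OD0_l0 // OD2_l0.
Qed.
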